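(* Let $k\ge 2$, $l,m\ge 1$, and let $\Gamma=K_{1,k-1}[K_l,K_m,\dots,K_m]$ (with $K_l$ replacing the center of the star and $K_m$ replacing each of the $k-1$ leaves), so $\Gamma$ has $n=l+(k-1)m$ vertices. Let $d_1=n-1$, $d_2=l+m-1$, and \[y_{1,2}=\tfrac12\Big[(l-1)d_1\sqrt2+(m-1)d_2\sqrt2\pm\sqrt{\big[(l-1)d_1\sqrt2-(m-1)d_2\sqrt2\big]^2+4lm(k-1)(d_1^2+d_2^2)}\Big].\] Then the Sombor spectrum of $\Gamma$ (eigenvalues of its Sombor matrix with multiplicities) consists of $-(n-1)\sqrt2$ with multiplicity $l-1$, $-(l+m-1)\sqrt2$ with multiplicity $mk-k-m+1$, $(m-1)(l+m-1)\sqrt2$ with multiplicity $k-2$, and $y_1$, $y_2$ each with multiplicity $1$ (multiplicities adding up when values coincide).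
   Context: All graphs are finite, simple and undirected. For a graph $\Gamma$ with vertices $u_1,\dots,u_N$, the Sombor matrix $S(\Gamma)$ is the $N\times N$ matrix whose $(i,j)$ entry is $\sqrt{\deg(u_i)^2+\deg(u_j)^2}$ if $u_i$ and $u_j$ are adjacent and $0$ otherwise; its eigenvalues with multiplicities form the Sombor spectrum. $K_r$ is the complete graph on $r$ vertices and $K_{1,k-1}$ is the star with center $u_1$ and leaves $u_2,\dots,u_k$. For a graph $H$ with vertices $u_1,\dots,u_k$ and pairwise disjoint graphs $\Gamma_1,\dots,\Gamma_k$, the generalized join $H[\Gamma_1,\dots,\Gamma_k]$ is obtained by replacing each $u_i$ by $\Gamma_i$ and joining every vertex of $\Gamma_i$ to every vertex of $\Gamma_j$ whenever $u_i$ is adjacent to $u_j$ in $H$. *)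

From HB Require Import structures.
From mathcomp Require Import all_boot all_order all_algebra.
From mathcomp Require Import reals.
Set Implicit Arguments. Unset Strict Implicit. Unset Printing Implicit Defensive.
Import Order.TTheory GRing.Theory Num.Theory.
Local Open Scope ring_scope.

(* A finite simple graph on a finite vertex type T is given by its
   adjacency relation (assumed symmetric and irreflexive where needed). *)

Definition deg (T : finType) (e : rel T) (x : T) : nat := #|[pred y | e x y]|.

Definition sombor_mx (R : rcfType) (T : finType) (e : rel T) : 'M[R]_#|T| :=
  \matrix_(i, j) (let x := enum_val i in let y := enum_val j in
     if e x y then Num.sqrt (((deg e x)%:R) ^+ 2 + ((deg e y)%:R) ^+ 2) else 0).

Definition complete_rel (r : nat) : rel 'I_r := fun a b => a != b.

Definition star_rel (k : nat) : rel 'I_k :=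
  fun i j => (i != j) && ((val i == 0%N) || (val j == 0%N)).

Definition gjoin_rel (k : nat) (H : rel 'I_k) (s : 'I_k -> nat)
  (G : forall i, rel 'I_(s i)) : rel {i : 'I_k & 'I_(s i)} :=
  fun x y => if tag x == tag y then G (tag x) (tagged x) (tagged_as x y)
             else H (tag x) (tag y).

Definition star_sizes (k l m : nat) : 'I_k -> nat :=
  fun i => if val i == 0%N then l else m.

Definition star_join_rel (k l m : nat) :=
  @gjoin_rel k (@star_rel k) (@star_sizes k l m)
    (fun i => @complete_rel (@star_sizes k l m i)).

From HB Require Import structures.
From mathcomp Require Import all_boot all_order all_algebra.
From mathcomp Require Import reals.
From mathcomp Require Import ring.
Import Order.TTheory GRing.Theory Num.Theory.
Local Open Scope ring_scope.
Set Implicit Arguments. Unset Strict Implicit. Unset Printing Implicit Defensive.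

(* The Sombor matrix of a generalized join of complete graphs vanishes on the
   diagonal and, off it, depends only on the blocks of the two vertices: it is
   P W P^T - diag (W i i) for the 0/1 block-indicator matrix P and a k x k weight
   matrix W.  Sylvester's identity det (1 - U V) = det (1 - V U) then factors its
   characteristic polynomial as prod_i (X + W i i)^(|block i| - 1) times that of
   the quotient matrix W diag (|block j|) - diag (W i i).  For the star this
   quotient is an arrowhead matrix, handled by a Schur complement, and its
   quadratic factor splits over the reals as (X - y1) (X - y2).  Polynomial
   identities are checked by evaluation away from the finitely many points where
   the matrices being inverted are singular. *)

Lemma poly_eq_off_roots (R : numDomainType) (p q r : {poly R}) :
  r != 0 -> (forall x, r.[x] != 0 -> p.[x] = q.[x]) -> p = q.
Proof.
move=> r_neq0 pq; apply/eqP; rewrite -subr_eq0.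
suff : (p - q) * r == 0 by rewrite mulf_eq0 (negbTE r_neq0) orbF.
set d := (p - q) * r.
apply/eqP/(@roots_geq_poly_eq0 _ _ [seq i%:R | i <- iota 0 (size d)]).
- apply/allP => _ /mapP [i _ ->]; rewrite /root hornerM hornerD hornerN.
  by have [->|/pq ->] := eqVneq r.[i%:R] 0; rewrite ?mulr0 ?subrr ?mul0r.
- by rewrite map_inj_uniq ?iota_uniq // => i j /eqP; rewrite eqr_nat => /eqP.
- by rewrite size_map size_iota.
Qed.

Lemma horner_char_poly (R : comNzRingType) n (A : 'M[R]_n) x :
  (char_poly A).[x] = \det (x%:M - A).
Proof.
rewrite -horner_evalE -det_map_mx; congr (\det _); apply/matrixP => i j.
by rewrite !mxE /= horner_evalE hornerD hornerN hornerMn hornerX hornerC.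
Qed.

Lemma det_sylvester (R : comNzRingType) m n (U : 'M[R]_(m, n))
    (V : 'M[R]_(n, m)) :
  \det (1%:M - U *m V) = \det (1%:M - V *m U).
Proof.
have LU : block_mx 1%:M U V 1%:M =
    block_mx 1%:M 0 V 1%:M *m block_mx 1%:M U 0 (1%:M - V *m U).
  by rewrite mulmx_block !mul1mx !mul0mx !mulmx1 !addr0 addrC subrK.
have UL : block_mx 1%:M U V 1%:M =
    block_mx (1%:M - U *m V) U 0 1%:M *m block_mx 1%:M 0 V 1%:M.
  by rewrite mulmx_block !mul1mx !mul0mx !mulmx1 mulmx0 !add0r subrK.
have := congr1 determinant LU; rewrite {1}UL !det_mulmx !det_lblock !det_ublock.
by rewrite !det1 !mul1r !mulr1.
Qed.

Lemma det_block_schur (R : comUnitRingType) m n (A : 'M[R]_m) (B : 'M[R]_(m, n))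
    (C : 'M[R]_(n, m)) (D : 'M[R]_n) :
  D \in unitmx -> \det (block_mx A B C D) = \det (A - B *m invmx D *m C) * \det D.
Proof.
move=> D_unit.
have -> : block_mx A B C D =
    block_mx 1%:M (B *m invmx D) 0 1%:M *m block_mx (A - B *m invmx D *m C) 0 C D.
  by rewrite mulmx_block !mul1mx !mul0mx !add0r subrK -mulmxA mulVmx ?mulmx1.
by rewrite det_mulmx det_ublock det_lblock !det1 !mul1r.
Qed.

Section Blowup.
Variables (F : fieldType) (n k : nat) (f : 'I_n -> 'I_k).

Definition fiber_size (i : 'I_k) : nat := #|[pred p | f p == i]|.

Definition fiber_mx : 'M[F]_(n, k) := \matrix_(p, i) (f p == i)%:R.

Definition blowup_mx (W : 'M[F]_k) : 'M[F]_n :=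
  \matrix_(p, q) (if p == q then 0 else W (f p) (f q)).

Definition quotient_mx (W : 'M[F]_k) : 'M[F]_k :=
  \matrix_(i, j) ((fiber_size j)%:R * W i j - (i == j)%:R * W i i).

Lemma mul_fiber_mx m (A : 'M[F]_(k, m)) p j : (fiber_mx *m A) p j = A (f p) j.
Proof.
rewrite !mxE (bigD1 (f p)) //= mxE eqxx mul1r big1 ?addr0 // => i /negbTE fi.
by rewrite mxE eq_sym fi mul0r.
Qed.

Lemma mul_mx_fiber_tr m (A : 'M[F]_(m, k)) i q :
  (A *m fiber_mx^T) i q = A i (f q).
Proof.
rewrite !mxE (bigD1 (f q)) //= !mxE eqxx mulr1 big1 ?addr0 // => j /negbTE fj.
by rewrite !mxE eq_sym fj mulr0.
Qed.

Lemma fiber_conj_mx (W : 'M[F]_k) :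
  fiber_mx *m W *m fiber_mx^T = \matrix_(p, q) W (f p) (f q).
Proof. by apply/matrixP => p q; rewrite mul_mx_fiber_tr mul_fiber_mx mxE. Qed.

Lemma fiber_tr_diag_fiber (g : 'I_k -> F) :
  fiber_mx^T *m diag_mx (\row_p g (f p)) *m fiber_mx =
  diag_mx (\row_i ((fiber_size i)%:R * g i)).
Proof.
apply/matrixP => i j; rewrite mul_mx_diag !mxE.
under eq_bigr do rewrite !mxE.
rewrite (bigID (fun p => f p == i)) /= [X in _ + X]big1 ?addr0 => [|p /negbTE ->];
  last by rewrite !mul0r.
rewrite (eq_bigr (fun _ => g i * (i == j)%:R)) => [|p /eqP ->];
  last by rewrite eqxx mul1r.
rewrite sumr_const -/(fiber_size i) mulr_natl.
by case: (i == j); rewrite ?mulr1 ?mulr0 ?mul0rn.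
Qed.

Lemma prod_fiber (g : 'I_k -> F) : \prod_p g (f p) = \prod_i g i ^+ fiber_size i.
Proof.
rewrite (partition_big f xpredT) //=; apply: eq_bigr => i _.
by rewrite (eq_bigr (fun _ => g i)) => [|p /eqP ->]; rewrite ?prodr_const.
Qed.

Lemma det_blowup (W : 'M[F]_k) (x : F) : (forall i, x + W i i != 0) ->
  \det (x%:M - blowup_mx W) * \prod_i (x + W i i) =
  \prod_p (x + W (f p) (f p)) * \det (x%:M - quotient_mx W).
Proof.
move=> x_neq0.
pose D := diag_mx (\row_p (x + W (f p) (f p))).
pose D' := diag_mx (\row_p (x + W (f p) (f p))^-1).
have D'D : D' *m D = 1%:M.
  rewrite /D /D' mulmx_diag -diag_const_mx; congr diag_mx; apply/rowP => p.
  by rewrite !mxE mulVf.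
have -> : x%:M - blowup_mx W = (1%:M - fiber_mx *m (W *m fiber_mx^T *m D')) *m D.
  rewrite mulmxBl mul1mx -!mulmxA D'D mulmx1 mulmxA fiber_conj_mx.
  apply/matrixP => p r; rewrite !mxE.
  by case: eqVneq => [->|_]; rewrite ?mulr1n ?mulr0n; ring.
have -> : x%:M - quotient_mx W =
    (1%:M - W *m (fiber_mx^T *m D' *m fiber_mx)) *m diag_mx (\row_i (x + W i i)).
  rewrite /D' (fiber_tr_diag_fiber (fun i => (x + W i i)^-1)).
  rewrite mulmxBl mul1mx -mulmxA mulmx_diag.
  apply/matrixP => i j; rewrite mul_mx_diag !mxE divfK //.
  by case: eqVneq => [->|_]; rewrite ?mulr1n ?mulr0n; ring.
rewrite !det_mulmx det_sylvester !mulmxA /D !det_diag.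
under eq_bigr do rewrite mxE; under [X in _ * (_ * X)]eq_bigr do rewrite mxE.
by rewrite mulrAC mulrC.
Qed.

End Blowup.

Lemma char_poly_blowup (F : numFieldType) n k (f : 'I_n -> 'I_k) (W : 'M[F]_k) :
    (forall i, 0 < fiber_size f i)%N ->
  char_poly (blowup_mx f W) =
  \prod_i ('X + (W i i)%:P) ^+ (fiber_size f i).-1 * char_poly (quotient_mx f W).
Proof.
move=> fiber_gt0; set r := \prod_i ('X + (W i i)%:P).
have r_neq0 : r != 0 by apply/monic_neq0/monic_prod => i _; exact: monicXaddC.
have rE x : r.[x] = \prod_i (x + W i i).
  by rewrite horner_prod; apply: eq_bigr => i _; rewrite !hornerE.
apply: (poly_eq_off_roots r_neq0) => x; rewrite rE => rx_neq0.
apply: (mulIf rx_neq0); rewrite !horner_char_poly hornerM horner_prod.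
rewrite det_blowup; last by move=> i; exact: (prodf_neq0 _ _ rx_neq0).
rewrite (prod_fiber f (fun i => x + W i i)) mulrAC -big_split /=.
rewrite horner_char_poly; congr (_ * _); apply: eq_bigr => i _.
by rewrite !hornerE -exprSr prednK.
Qed.

Definition arrow_mx (R : nzRingType) n (a b c d : R) : 'M[R]_(1 + n) :=
  block_mx a%:M (const_mx b) (const_mx c) d%:M.

Lemma arrow_mxE (R : nzRingType) n (a b c d : R) (i j : 'I_n.+1) :
  arrow_mx n a b c d i j =
  if i == ord0 then (if j == ord0 then a else b)
  else if j == ord0 then c else (i == j)%:R * d.
Proof.
have ord0E : ord0 = lshift n (ord0 : 'I_1) by apply: val_inj.
have liftE (h : 'I_n) : lift ord0 h = rshift 1 h by apply: val_inj.
rewrite /arrow_mx.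
case: (unliftP ord0 i) => [i'|] ->; case: (unliftP ord0 j) => [j'|] ->;
  rewrite ?liftE {1 2}ord0E
    ?(block_mxEul, block_mxEur, block_mxEdl, block_mxEdr) !mxE //=.
by rewrite (inj_eq (@rshift_inj 1 n)) mulr_natl.
Qed.

Lemma det_arrow (F : fieldType) n (a b c d x : F) : x != d ->
  \det (x%:M - arrow_mx n a b c d) =
  (x - d) ^+ n * (x - a - n%:R * b * c / (x - d)).
Proof.
move=> xd_neq0; rewrite -subr_eq0 in xd_neq0.
rewrite [x%:M]scalar_mx_block opp_block_mx add_block_mx.
rewrite -!raddfB /= !sub0r det_block_schur; last first.
  by rewrite unitmxE det_scalar unitfE expf_neq0.
rewrite invmx_scalar mul_mx_scalar scalemx_const det_mx11 det_scalar !mxE.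
under eq_bigr do rewrite !mxE.
rewrite sumr_const card_ord eqxx mulr1n -mulr_natl.
by field.
Qed.

Lemma char_poly_arrow (F : numFieldType) n (a b c d : F) :
  char_poly (arrow_mx n.+1 a b c d) =
  ('X - d%:P) ^+ n * (('X - a%:P) * ('X - d%:P) - (n.+1%:R * b * c)%:P).
Proof.
apply: (@poly_eq_off_roots _ _ _ ('X - d%:P)); first by rewrite polyXsubC_eq0.
move=> x; rewrite hornerXsubC => xd_neq0.
rewrite horner_char_poly det_arrow; last by rewrite -subr_eq0.
rewrite !hornerE exprS.
by field.
Qed.

Lemma quadratic_factor (R : rcfType) (a b c : R) : 0 <= c ->
  let D := Num.sqrt ((a - b) ^+ 2 + 4 * c) in
  ('X - a%:P) * ('X - b%:P) - c%:P =
  ('X - ((a + b + D) / 2)%:P) * ('X - ((a + b - D) / 2)%:P).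
Proof.
move=> c_ge0 D; have D2 : D ^+ 2 = (a - b) ^+ 2 + 4 * c.
  by rewrite sqr_sqrtr // addr_ge0 ?sqr_ge0 ?mulr_ge0.
apply: (@poly_eq_off_roots _ _ _ 1) => [|x _]; first exact: oner_neq0.
rewrite !hornerE; transitivity ((x - (a + b) / 2) ^+ 2 - D ^+ 2 / 4).
  by rewrite D2; field.
by field.
Qed.

Lemma card_tag_pred (I : finType) (J : I -> finType) (P : pred I) :
  #|[pred y : {i : I & J i} | P (tag y)]| = (\sum_(i | P i) #|J i|)%N.
Proof.
rewrite -sum1_card (eq_bigr (fun i => \sum_(j : J i) 1)%N) => [|i _]; last first.
  by rewrite sum1_card.
rewrite sig_big_dep /=.
by apply: eq_bigl => y; rewrite andbT.
Qed.

Section CompleteJoin.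
Variables (k : nat) (H : rel 'I_k) (s : 'I_k -> nat).
Local Notation T := {i : 'I_k & 'I_(s i)}.
Local Notation join := (@gjoin_rel k H s (fun i => @complete_rel (s i))).

Lemma complete_join_relE (x y : T) :
  join x y = (x != y) && ((tag x == tag y) || H (tag x) (tag y)).
Proof.
case: x y => i a [j b]; rewrite /gjoin_rel /=.
have [eq_ij|ij] := eqVneq i j.
  by subst j; rewrite tagged_asE eq_Tagged andbT.
case: (H i j); rewrite ?andbF // andbT.
by apply/esym/eqP => /(congr1 tag) /= /eqP; rewrite (negbTE ij).
Qed.

Definition vertex_block (p : 'I_#|{: T}|) : 'I_k := tag (enum_val p).

Definition join_block_deg (i : 'I_k) : nat :=
  (\sum_(j | (i == j) || H i j) s j).-1.

Lemma deg_complete_join (x : T) : deg join x = join_block_deg (tag x).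
Proof.
rewrite /deg (eq_card (fun y => complete_join_relE x y)).
rewrite /join_block_deg -(eq_bigr _ (fun j _ => card_ord (s j))) -card_tag_pred.
rewrite [in RHS](cardD1 x) inE eqxx add1n /=.
by apply: eq_card => y; rewrite !inE eq_sym.
Qed.

Definition complete_join_weight (R : rcfType) : 'M[R]_k :=
  \matrix_(i, j) (if (i == j) || H i j then
    Num.sqrt ((join_block_deg i)%:R ^+ 2 + (join_block_deg j)%:R ^+ 2) else 0).

Lemma sombor_complete_join (R : rcfType) :
  sombor_mx R join = blowup_mx vertex_block (complete_join_weight R).
Proof.
apply/matrixP => p q; rewrite !mxE /= complete_join_relE (inj_eq enum_val_inj).
by rewrite !deg_complete_join; case: eqVneq.
Qed.

Lemma fiber_size_vertex_block (i : 'I_k) : fiber_size vertex_block i = s i.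
Proof.
have := on_card_preimset (onW_bij [pred y : T | tag y == i] (@enum_val_bij T)).
rewrite (@card_tag_pred _ _ (pred1 i)) big_pred1_eq card_ord => <-.
by apply: eq_card => p; rewrite !inE.
Qed.

End CompleteJoin.

Lemma sqrt_sqr_double (R : rcfType) (d : R) :
  0 <= d -> Num.sqrt (d ^+ 2 + d ^+ 2) = d * Num.sqrt 2.
Proof.
move=> d_ge0; rewrite -mulr2n -[_ *+ 2]mulr_natr sqrtrM ?sqr_ge0 //.
by rewrite sqrtr_sqr ger0_norm.
Qed.

Section StarJoin.
Variables (k1 l m : nat).
Local Notation k := k1.+1.
Local Notation s := (@star_sizes k l m).

Lemma star_sizes_lift (h : 'I_k1) : s (lift ord0 h) = m.
Proof. by []. Qed.

Lemma eq_or_star_relE (i j : 'I_k) :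
  (i == j) || star_rel i j = [|| i == j, i == ord0 | j == ord0].
Proof. by rewrite /star_rel -!val_eqE /=; case: eqVneq. Qed.

Lemma star_block_deg (i : 'I_k) :
  join_block_deg (@star_rel k) s i =
  if i == ord0 then (l + k1 * m - 1)%N else (l + m - 1)%N.
Proof.
rewrite /join_block_deg; under eq_bigl do rewrite eq_or_star_relE.
rewrite big_mkcond big_ord_recl /=.
case: (unliftP ord0 i) => [i'|] -> /=; rewrite -subn1.
  under eq_bigr => j do
    rewrite (inj_eq lift_inj) (eq_sym i') (eq_sym (lift ord0 j))
            (negbTE (neq_lift _ _)) orbF.
  by rewrite -big_mkcond big_pred1_eq.
by rewrite big_const_ord iter_addn_0 mulnC.
Qed.

Variable R : rcfType.
Local Notation W := (@complete_join_weight k (@star_rel k) s R).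
Local Notation d1 := ((l + k1 * m - 1)%N%:R : R).
Local Notation d2 := ((l + m - 1)%N%:R : R).
Local Notation c := (Num.sqrt (d1 ^+ 2 + d2 ^+ 2)).

Lemma star_weightE (i j : 'I_k) : W i j =
  if [|| i == j, i == ord0 | j == ord0] then
    Num.sqrt ((if i == ord0 then d1 else d2) ^+ 2 +
              (if j == ord0 then d1 else d2) ^+ 2)
  else 0.
Proof.
rewrite mxE eq_or_star_relE !star_block_deg.
by case: (i == ord0); case: (j == ord0).
Qed.

Lemma quotient_star_join : (0 < l)%N -> (0 < m)%N ->
  quotient_mx (@vertex_block k s) W =
  arrow_mx k1 ((l - 1)%N%:R * d1 * Num.sqrt 2) (m%:R * c) (l%:R * c)
    ((m - 1)%N%:R * d2 * Num.sqrt 2).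
Proof.
move=> l_gt0 m_gt0; apply/matrixP => i j.
rewrite arrow_mxE mxE !fiber_size_vertex_block !star_weightE.
have lift_neq0 (h : 'I_k1) : (lift ord0 h == ord0) = false.
  by rewrite eq_sym (negbTE (neq_lift _ _)).
case: (unliftP ord0 i) => [i'|] ->; case: (unliftP ord0 j) => [j'|] ->;
  rewrite ?lift_neq0 ?(inj_eq lift_inj) ?eqxx /= ?sqrt_sqr_double
          ?star_sizes_lift //.
- rewrite orbF; case: (i' == j'); rewrite ?mulr0 ?mul0r ?subr0 // (natrB _ m_gt0).
  by rewrite !mul1r; ring.
- by rewrite mul0r subr0 addrC.
- by rewrite mul0r subr0.
- by rewrite (natrB _ l_gt0) mul1r; ring.
Qed.

Lemma prod_star_blocks :
  \prod_i ('X + (W i i)%:P) ^+ (fiber_size (@vertex_block k s) i).-1 =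
  ('X + (d1 * Num.sqrt 2)%:P) ^+ (l - 1) *
  ('X + (d2 * Num.sqrt 2)%:P) ^+ ((m - 1) * k1).
Proof.
rewrite big_ord_recl fiber_size_vertex_block star_weightE !eqxx /=.
rewrite sqrt_sqr_double //.
under eq_bigr => i _ do
  rewrite fiber_size_vertex_block star_sizes_lift star_weightE eqxx /=
          sqrt_sqr_double //.
by rewrite prodr_const card_ord -exprM !subn1.
Qed.

End StarJoin.

Theorem corollary3p6 (R : realType) (k l m : nat)
  (hk : (2 <= k)%N) (hl : (1 <= l)%N) (hm : (1 <= m)%N) :
  let n := (l + (k - 1) * m)%N in
  let d1 : R := (n - 1)%N%:R in
  let d2 : R := (l + m - 1)%N%:R in
  let s2 : R := Num.sqrt 2 in
  let a : R := (l - 1)%N%:R * d1 * s2 in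
  let b : R := (m - 1)%N%:R * d2 * s2 in
  let D : R := Num.sqrt ((a - b) ^+ 2
                 + 4 * l%:R * m%:R * (k - 1)%N%:R * (d1 ^+ 2 + d2 ^+ 2)) in
  let y1 : R := (a + b + D) / 2 in
  let y2 : R := (a + b - D) / 2 in
  char_poly (sombor_mx R (@star_join_rel k l m)) =
    ('X + (d1 * s2)%:P) ^+ (l - 1)%N%N
    * ('X + (d2 * s2)%:P) ^+ ((m - 1) * (k - 1))%N
    * ('X - ((m - 1)%N%:R * d2 * s2)%:P) ^+ (k - 2)%N
    * ('X - y1%:P) * ('X - y2%:P).
Proof.
case: k hk => [|[|k2]] // _; rewrite !subSS !subn0 => n d1 d2 s2 a b D y1 y2.
rewrite -mulrA.
have -> : ('X - y1%:P) * ('X - y2%:P) =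
    ('X - a%:P) * ('X - b%:P) - (l%:R * m%:R * k2.+1%:R * (d1 ^+ 2 + d2 ^+ 2))%:P.
  by rewrite quadratic_factor ?mulr_ge0 ?addr_ge0 ?sqr_ge0 // !mulrA.
rewrite sombor_complete_join char_poly_blowup => [|i]; last first.
  by rewrite fiber_size_vertex_block /star_sizes; case: ifP.
rewrite prod_star_blocks quotient_star_join // char_poly_arrow mulrA.
rewrite -/n -/d1 -/d2 -/s2 -/a -/b; congr (_ * (_ - _%:P)).
by rewrite -[d1 ^+ 2 + d2 ^+ 2 in RHS]sqr_sqrtr ?addr_ge0 ?sqr_ge0 //; ring.
Qed.
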